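(* Let $A\in\mathbb{R}^{n\times n}$, $B\in\mathbb{R}^{n\times m}$, $L\in\mathbb{R}^{n\times m}$, $R\in\mathbb{R}^{m\times m}$ with $R$ symmetric positive definite, and $A_0^i\in\mathbb{R}^{n\times n}$, $B_0^i\in\mathbb{R}^{n\times m}$ for $i=1,\dots,r$. If the pair $(A,B)$ is stabilizable, then for every symmetric positive semidefinite $\widetilde X\in\mathbb{R}^{n\times n}$ the pair $\big(A_{\mathrm c}(\widetilde X),\,G_{\mathrm c}(\widetilde X)\big)$ is stabilizable, where $A_{\mathrm c}(X)=A-B\,[R_{\mathrm c}(X)]^{-1}[L_{\mathrm c}(X)]^{\mathsf T}$, $G_{\mathrm c}(X)=B\,[R_{\mathrm c}(X)]^{-1}B^{\mathsf T}$, $L_{\mathrm c}(X)=L+\sum_{i=1}^r (A_0^i)^{\mathsf T}XB_0^i$, $R_{\mathrm c}(X)=R+\sum_{i=1}^r (B_0^i)^{\mathsf T}XB_0^i$.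
   Context: A pair $(A,G)$ with $A,G\in\mathbb{R}^{n\times n}$ (or $(A,B)$ with $B\in\mathbb{R}^{n\times m}$) is stabilizable if there is no nonzero $y\in\mathbb{C}^n$ and $\lambda\in\mathbb{C}$ with $\mathrm{Re}(\lambda)\ge 0$ such that $y^{\mathsf H}[A-\lambda I,\ G]=0$ (resp. $y^{\mathsf H}[A-\lambda I,\ B]=0$). For $X\succeq 0$, $R_{\mathrm c}(X)\succeq R\succ 0$ is invertible. *)

From HB Require Import structures.
From mathcomp Require Import all_boot all_order all_algebra.
From mathcomp Require Import complex.
Set Implicit Arguments. Unset Strict Implicit. Unset Printing Implicit Defensive.
Import Order.TTheory GRing.Theory Num.Theory.
Local Open Scope ring_scope.

Definition cmx (R : rcfType) (p q : nat) (M : 'M[R]_(p, q)) : 'M[R[i]]_(p, q) :=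
  map_mx (fun x => (x%:C)%C) M.

Definition ctmx (R : rcfType) (p q : nat) (M : 'M[R[i]]_(p, q)) : 'M[R[i]]_(q, p) :=
  (map_mx (@conjc R) M)^T.

Definition stabilizable (R : rcfType) (n k : nat)
    (A : 'M[R]_n) (G : 'M[R]_(n, k)) : Prop :=
  ~ exists (y : 'cV[R[i]]_n) (lam : R[i]),
      [/\ y != 0, 0 <= complex.Re lam &
          ctmx y *m row_mx (cmx A - lam%:M) (cmx G) = 0].

Definition symmetricmx (R : rcfType) (n : nat) (M : 'M[R]_n) : Prop := M^T = M.

Definition posdef (R : rcfType) (n : nat) (M : 'M[R]_n) : Prop :=
  symmetricmx M /\ forall x : 'cV[R]_n, x != 0 -> 0 < (x^T *m M *m x) 0 0.

Definition psd (R : rcfType) (n : nat) (M : 'M[R]_n) : Prop :=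
  symmetricmx M /\ forall x : 'cV[R]_n, 0 <= (x^T *m M *m x) 0 0.

Section Riccati.
Variables (R : rcfType) (n m r : nat).
Variables (A : 'M[R]_n) (B L : 'M[R]_(n, m)) (Rw : 'M[R]_m)
          (A0 : 'I_r -> 'M[R]_n) (B0 : 'I_r -> 'M[R]_(n, m)).

Definition Lc (X : 'M[R]_n) : 'M[R]_(n, m) :=
  L + \sum_(i < r) (A0 i)^T *m X *m B0 i.
Definition Rc (X : 'M[R]_n) : 'M[R]_m :=
  Rw + \sum_(i < r) (B0 i)^T *m X *m B0 i.
Definition Ac (X : 'M[R]_n) : 'M[R]_n :=
  A - B *m invmx (Rc X) *m (Lc X)^T.
Definition Gc (X : 'M[R]_n) : 'M[R]_n :=
  B *m invmx (Rc X) *m B^T.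
End Riccati.

(* If y^H [A_c - lam I, G_c] = 0, then the G_c block gives y^H B R_c^-1 B^T y = 0.
   Since R_c = R + sum (B_0^i)^T X B_0^i is positive definite, so is the Hermitian
   form of R_c^-1, whence y^H B = 0.  Then y^H A_c = y^H A, and the same y and lam
   show that (A, B) is not stabilizable. *)
From Pilot Require Import Defs.
From mathcomp Require Import all_boot all_order all_algebra.
From mathcomp Require Import complex ring lra.
Import Order.TTheory GRing.Theory Num.Theory.
Local Open Scope ring_scope.

Section ComplexEmbedding.
Context {R : rcfType}.

Lemma cmx1 k : cmx (1%:M : 'M[R]_k) = 1%:M.
Proof. by apply/matrixP => i j; rewrite !mxE; case: (i == j). Qed.

Lemma cmxM p q s (P : 'M[R]_(p, q)) (Q : 'M[R]_(q, s)) :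
  cmx (P *m Q) = cmx P *m cmx Q.
Proof. exact: (map_mxM (real_complex R)). Qed.

Lemma cmxB p q (P Q : 'M[R]_(p, q)) : cmx (P - Q) = cmx P - cmx Q.
Proof. exact: (map_mxB (real_complex R)). Qed.

Lemma ctmxM p q s (P : 'M[R[i]]_(p, q)) (Q : 'M[R[i]]_(q, s)) :
  ctmx (P *m Q) = ctmx Q *m ctmx P.
Proof. by rewrite /ctmx (map_mxM (@conjc R)) trmx_mul. Qed.

Lemma ctmxK p q (P : 'M[R[i]]_(p, q)) : ctmx (ctmx P) = P.
Proof. by apply/matrixP => i j; rewrite !mxE conjcK. Qed.

Lemma ctmx_cmx p q (P : 'M[R]_(p, q)) : ctmx (cmx P) = cmx P^T.
Proof. by apply/matrixP => i j; rewrite !mxE conjc_real. Qed.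

Lemma Re_cmx_form {k} (M : 'M[R]_k) (u : 'rV[R[i]]_k) :
  let a := map_mx (@complex.Re R) u in let b := map_mx (@complex.Im R) u in
  complex.Re ((u *m cmx M *m ctmx u) 0 0)
    = (a *m M *m a^T) 0 0 + (b *m M *m b^T) 0 0.
Proof.
rewrite /= !mxE raddf_sum -big_split /=; apply: eq_bigr => j _.
rewrite !mxE !big_distrl raddf_sum -big_split /=; apply: eq_bigr => i _.
by rewrite !mxE; case: (u 0 i) => p q; case: (u 0 j) => p' q' /=; ring.
Qed.

End ComplexEmbedding.

Section PositiveDefinite.
Context {R : rcfType} {k : nat} {M : 'M[R]_k}.
Hypothesis posM : posdef M.

Lemma posdef_row_form_ge0 (v : 'rV[R]_k) : 0 <= (v *m M *m v^T) 0 0.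
Proof.
have [->|nz_v] := eqVneq v 0; first by rewrite !mul0mx mxE.
by apply/ltW; have := posM.2 v^T; rewrite trmxK trmx_eq0; apply.
Qed.

Lemma posdef_row_form_eq0 (v : 'rV[R]_k) : (v *m M *m v^T) 0 0 = 0 -> v = 0.
Proof.
move=> form0; apply/eqP; apply: contraT => nz_v.
by have := posM.2 v^T; rewrite trmxK trmx_eq0 form0 ltxx; apply.
Qed.

Lemma posdef_cmx_form_eq0 (u : 'rV[R[i]]_k) : u *m cmx M *m ctmx u = 0 -> u = 0.
Proof.
move=> form0; have := Re_cmx_form M u; rewrite form0 mxE /=.
set a := map_mx _ u; set b := map_mx _ u => formRe.
have ge0a := posdef_row_form_ge0 a; have ge0b := posdef_row_form_ge0 b.
have a0 : a = 0 by apply: posdef_row_form_eq0; lra.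
have b0 : b = 0 by apply: posdef_row_form_eq0; lra.
apply/matrixP => i j; move/matrixP/(_ i j): a0; move/matrixP/(_ i j): b0.
by rewrite !mxE; case: (u i j) => p q /= -> ->.
Qed.

Lemma posdef_unitmx : M \in unitmx.
Proof.
rewrite unitmxE unitfE; apply/det0P => -[v nz_v vM0].
by move/eqP: nz_v; apply; apply: posdef_row_form_eq0; rewrite vM0 mul0mx mxE.
Qed.

(* With u := z M^-1 we have z = u M, so the form of M^-1 at z is the form of M at u. *)
Lemma posdef_invmx_cmx_form_eq0 (z : 'rV[R[i]]_k) :
  z *m cmx (invmx M) *m ctmx z = 0 -> z = 0.
Proof.
set u := z *m cmx (invmx M).
have zE : z = u *m cmx M by rewrite -mulmxA -cmxM mulVmx ?posdef_unitmx // cmx1 mulmx1.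
rewrite {1}zE ctmxM ctmx_cmx posM.1 mulmxA => /posdef_cmx_form_eq0 u0.
by rewrite zE u0 mul0mx.
Qed.

End PositiveDefinite.

Lemma Rc_posdef {R : rcfType} {n m r : nat} {Rw : 'M[R]_m}
    (B0 : 'I_r -> 'M[R]_(n, m)) {X : 'M[R]_n} :
  posdef Rw -> psd X -> posdef (Rc Rw B0 X).
Proof.
move=> [symRw posRw] [symX psdX]; split.
  (* unqualified, [symmetricmx] would denote MathComp's sesquilinear notion *)
  rewrite /Defs.symmetricmx /Rc (raddfD (@trmx R m m)) (raddf_sum (@trmx R m m)).
  rewrite /= symRw; congr (_ + _).
  by apply: eq_bigr => i _; rewrite !trmx_mul trmxK symX mulmxA.
move=> x nz_x; rewrite /Rc mulmxDr mulmxDl mxE.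
apply: (lt_le_trans (posRw x nz_x)); rewrite lerDl.
rewrite mulmx_sumr mulmx_suml summxE; apply: sumr_ge0 => i _.
have -> : x^T *m ((B0 i)^T *m X *m B0 i) *m x = (B0 i *m x)^T *m X *m (B0 i *m x).
  by rewrite trmx_mul !mulmxA.
exact: psdX.
Qed.

Lemma stabilizable_feedback {R : rcfType} {n m : nat} {A : 'M[R]_n}
    {B : 'M[R]_(n, m)} {S : 'M[R]_m} (K : 'M[R]_(m, n)) :
  posdef S -> stabilizable A B ->
  stabilizable (A - B *m K) (B *m invmx S *m B^T).
Proof.
move=> posS stabAB [y [lam [nz_y Re_lam]]].
rewrite mul_mx_row -row_mx0 => /eq_row_mx[yAK yG].
have yB0 : ctmx y *m cmx B = 0.
  apply: (posdef_invmx_cmx_form_eq0 posS).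
  rewrite !cmxM !mulmxA in yG.
  by rewrite ctmxM ctmxK ctmx_cmx !mulmxA yG mul0mx.
apply: stabAB; exists y, lam; split => //.
move: yAK; rewrite cmxB cmxM !mulmxBr mulmxA yB0 mul0mx subr0 => yA.
by rewrite mul_mx_row mulmxBr yA yB0 row_mx0.
Qed.

Theorem lemma2p1 (R : rcfType) (n m r : nat)
    (A : 'M[R]_n) (B L : 'M[R]_(n, m)) (Rw : 'M[R]_m)
    (A0 : 'I_r -> 'M[R]_n) (B0 : 'I_r -> 'M[R]_(n, m)) :
  posdef Rw ->
  stabilizable A B ->
  forall Xt : 'M[R]_n, psd Xt ->
    stabilizable (Ac A B L Rw A0 B0 Xt) (Gc B Rw B0 Xt).
Proof.
move=> posRw stabAB Xt psdXt.
rewrite /Ac -mulmxA.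
exact: stabilizable_feedback (Rc_posdef B0 posRw psdXt) stabAB.
Qed.
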